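(* Let $p\ge3$, $d_j>0$, $\gamma_j\ge0$ ($j=1,\ldots,p$), with indices sorted so that $d_1^2/(d_1+\gamma_1)\ge\cdots\ge d_p^2/(d_p+\gamma_p)$, and for $3\le k\le p$ let \[ M_k=\frac{(k-2)^2}{\sum_{j=1}^k (d_j+\gamma_j)/d_j^2}+\sum_{j=k+1}^p\frac{d_j^2}{d_j+\gamma_j}. \] Then the sequence $(M_3,M_4,\ldots,M_p)$ is nonincreasing: for $3\le k\le p-1$, $M_k\ge M_{k+1}$, with equality if and only if \[ \frac{k-2}{\sum_{j=1}^k (d_j+\gamma_j)/d_j^2}=\frac{d_{k+1}^2}{d_{k+1}+\gamma_{k+1}}. \] Furthermore, let $A^\dagger=\operatorname{diag}(a_1^\dagger,\ldots,a_p^\dagger)$ be the unique maximizer of $\sum_j d_ja_j-2\max_j d_ja_j$ over $a_j\ge0$ with $\sum_j(d_j+\gamma_j)a_j^2=\sum_j d_j^2/(d_j+\gamma_j)$, and let $\nu$ be the largest index with $d_\nu a_\nu^\dagger=\max_j d_ja_j^\dagger$. If $\nu\le p-1$, then the condition $d_\nu a_\nu^\dagger>d_{\nu+1}a_{\nu+1}^\dagger$ is equivalent to \[ \frac{\nu-2}{\sum_{j=1}^\nu (d_j+\gamma_j)/d_j^2}>\frac{d_{\nu+1}^2}{d_{\nu+1}+\gamma_{\nu+1}}; \] consequently $\nu$ is the smallest index $k$ with $3\le k\le p-1$ such that $\frac{k-2}{\sum_{j=1}^k (d_j+\gamma_j)/d_j^2}>\frac{d_{k+1}^2}{d_{k+1}+\gamma_{k+1}}$,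 and $M_\nu>M_{\nu+1}$.
   Context: The maximizer $A^\dagger$ exists and is unique; $\nu\ge3$. *)

(* abstract R : realType (reals). Indices are 1-based naturals. *)
From HB Require Import structures.
From mathcomp Require Import all_boot all_order all_algebra.
From mathcomp Require Import reals.
Set Implicit Arguments. Unset Strict Implicit. Unset Printing Implicit Defensive.
Import Order.TTheory GRing.Theory Num.Theory.
Local Open Scope ring_scope.

Section Defs.
Variable R : realType.

Definition cc (d g : nat -> R) (j : nat) : R := d j ^+ 2 / (d j + g j).

Definition Ssum (d g : nat -> R) (k : nat) : R :=
  \sum_(1 <= j < k.+1) (d j + g j) / d j ^+ 2.

Definition Mk (d g : nat -> R) (p k : nat) : R :=
  (k%:R - 2) ^+ 2 / Ssum d g k + \sum_(k.+1 <= j < p.+1) cc d g j.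

Definition ratk (d g : nat -> R) (k : nat) : R := (k%:R - 2) / Ssum d g k.

(* max_j d_j b_j over j = 1..p (with 0 as neutral; all terms are >= 0 on the
   feasible set) *)
Definition maxdb (d b : nat -> R) (p : nat) : R :=
  \big[Num.max/0]_(1 <= j < p.+1) (d j * b j).

Definition obj (d b : nat -> R) (p : nat) : R :=
  \sum_(1 <= j < p.+1) d j * b j - 2 * maxdb d b p.

Definition feasible (d g b : nat -> R) (p : nat) : Prop :=
  (forall j, (1 <= j <= p)%N -> 0 <= b j) /\
  \sum_(1 <= j < p.+1) (d j + g j) * b j ^+ 2 = \sum_(1 <= j < p.+1) cc d g j.

End Defs.

From HB Require Import structures.
From mathcomp Require Import all_boot all_order all_algebra.
From mathcomp Require Import reals.
From mathcomp Require Import ring lra zify.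
Import Order.TTheory GRing.Theory Num.Theory.
Local Open Scope ring_scope.

(* Write c_j = d_j^2 / (d_j + gamma_j), w_j = 1 / c_j, S_k = w_1 + ... + w_k and
   r_k = (k - 2) / S_k.  Then M_k - M_(k+1) = S_k (r_k - c_(k+1))^2 / (c_(k+1) S_k + 1),
   which gives the monotonicity of M and its equality case.

   Let K be the first index K >= 3 with K = p or r_K > c_(K+1), and beta_j = min r_K c_j.
   Minimality of K gives w_j r_K <= 1 for j <= K, hence every b satisfies
   sum_j d_j b_j - 2 max_j d_j b_j <= sum_j w_j beta_j d_j b_j, with equality when
   d_j b_j = lam beta_j.  Choosing lam so that this b satisfies the constraint, the
   equality case of Cauchy-Schwarz for the w-weighted inner product forces
   d_j a_j = lam beta_j at every maximizer a.  So the last argmax of d_j a_j is K and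
   d_(K+1) a_(K+1) < d_K a_K. *)

Lemma sumr_nat_gt0 (R : numDomainType) (m n : nat) (F : nat -> R) :
  (m < n)%N -> (forall i, (m <= i < n)%N -> 0 < F i) -> 0 < \sum_(m <= i < n) F i.
Proof.
by move=> lt_mn /(ltr_sum_nat (F := fun=> 0) lt_mn); rewrite big1_eq.
Qed.

Lemma sumr_nat_le0_eq0 {R : numDomainType} {m n : nat} {F : nat -> R} :
  (forall i, (m <= i < n)%N -> 0 <= F i) -> \sum_(m <= i < n) F i <= 0 ->
  forall i, (m <= i < n)%N -> F i = 0.
Proof.
move=> F_ge0 sum_le0 i hi; apply/eqP; rewrite eq_le F_ge0 // andbT.
move: sum_le0; rewrite (bigD1_seq i) ?mem_index_iota ?iota_uniq //=.
have rest_ge0 : 0 <= \sum_(m <= j < n | j != i) F j.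
  by rewrite big_nat_cond sumr_ge0 // => j /andP[hj _]; exact: F_ge0.
by apply: le_trans; rewrite lerDl.
Qed.

Section Weights.
Context {R : realType} {p : nat} {d g : nat -> R}.
Hypothesis d_gt0 : forall j, (1 <= j <= p)%N -> 0 < d j.
Hypothesis g_ge0 : forall j, (1 <= j <= p)%N -> 0 <= g j.

Definition wgt (j : nat) : R := (d j + g j) / d j ^+ 2.

Lemma dg_gt0 {j} : (1 <= j <= p)%N -> 0 < d j + g j.
Proof. by move=> hj; rewrite ltr_wpDr ?g_ge0 ?d_gt0. Qed.

Lemma cc_gt0 {j} : (1 <= j <= p)%N -> 0 < cc d g j.
Proof. by move=> hj; rewrite divr_gt0 ?exprn_gt0 ?d_gt0 ?dg_gt0. Qed.

Lemma wgt_gt0 {j} : (1 <= j <= p)%N -> 0 < wgt j.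
Proof. by move=> hj; rewrite divr_gt0 ?exprn_gt0 ?d_gt0 ?dg_gt0. Qed.

Lemma wgt_ccK {j} : (1 <= j <= p)%N -> wgt j * cc d g j = 1.
Proof.
move=> hj; rewrite /wgt /cc; field.
by rewrite (gt_eqF (d_gt0 _ hj)) (gt_eqF (dg_gt0 hj)).
Qed.

Lemma wgt_ccV {j} : (1 <= j <= p)%N -> wgt j = (cc d g j)^-1.
Proof.
move=> hj; apply: (mulIf (lt0r_neq0 (cc_gt0 hj))).
by rewrite wgt_ccK // mulVf // lt0r_neq0 // cc_gt0.
Qed.

Lemma dg_sqr_wgt j (x : R) : (1 <= j <= p)%N ->
  (d j + g j) * x ^+ 2 = wgt j * (d j * x) ^+ 2.
Proof. by move=> hj; rewrite /wgt; field; rewrite (gt_eqF (d_gt0 _ hj)). Qed.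

Lemma SsumS k : Ssum d g k.+1 = Ssum d g k + wgt k.+1.
Proof. by rewrite /Ssum big_nat_recr. Qed.

Lemma Ssum_gt0 {k} : (1 <= k <= p)%N -> 0 < Ssum d g k.
Proof. by move=> hk; apply: sumr_nat_gt0 => [|j hj]; [lia | apply: wgt_gt0; lia]. Qed.

Lemma Mk_subS k : (1 <= k < p)%N ->
  Mk d g p k - Mk d g p k.+1 =
  Ssum d g k * (ratk d g k - cc d g k.+1) ^+ 2 / (cc d g k.+1 * Ssum d g k + 1).
Proof.
move=> hk; have hk1 : (1 <= k.+1 <= p)%N by lia.
have S_gt0 : 0 < Ssum d g k by apply: Ssum_gt0; lia.
have c_gt0 := cc_gt0 hk1.
rewrite /Mk /ratk SsumS (big_ltn (_ : k.+1 < p.+1)%N) //.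
rewrite wgt_ccV // [k.+1%:R]mulrS; field.
set S := Ssum d g k in S_gt0 *; set c := cc d g k.+1 in c_gt0 *.
rewrite (gt_eqF S_gt0) (gt_eqF c_gt0) /=.
by rewrite andbT lt0r_neq0 // addr_gt0 // mulr_gt0.
Qed.

Lemma Mk_leS k : (1 <= k < p)%N -> Mk d g p k.+1 <= Mk d g p k.
Proof.
move=> hk; have S_gt0 : 0 < Ssum d g k by apply: Ssum_gt0; lia.
have c_gt0 : 0 < cc d g k.+1 by apply: cc_gt0; lia.
rewrite -subr_ge0 Mk_subS //; apply: divr_ge0.
  by rewrite mulr_ge0 ?sqr_ge0 ?ltW.
by apply/ltW; rewrite addr_gt0 // mulr_gt0.
Qed.

Lemma Mk_eqS k : (1 <= k < p)%N ->
  Mk d g p k = Mk d g p k.+1 <-> ratk d g k = cc d g k.+1.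
Proof.
move=> hk; have S_gt0 : 0 < Ssum d g k by apply: Ssum_gt0; lia.
have c_gt0 : 0 < cc d g k.+1 by apply: cc_gt0; lia.
have den_gt0 : 0 < cc d g k.+1 * Ssum d g k + 1 by rewrite addr_gt0 // mulr_gt0.
have E : (Mk d g p k == Mk d g p k.+1) = (ratk d g k == cc d g k.+1).
  rewrite -subr_eq0 Mk_subS // mulf_eq0 invr_eq0 mulf_eq0 sqrf_eq0 subr_eq0.
  by rewrite (gt_eqF S_gt0) (gt_eqF den_gt0) orbF.
by split=> /eqP; [rewrite E | rewrite -E] => /eqP.
Qed.

Lemma ratkS_le_cc k : (1 <= k < p)%N ->
  (ratk d g k.+1 <= cc d g k.+1) = (ratk d g k <= cc d g k.+1).
Proof.
move=> hk; have S_gt0 : 0 < Ssum d g k by apply: Ssum_gt0; lia.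
have c_gt0 : 0 < cc d g k.+1 by apply: cc_gt0; lia.
rewrite /ratk SsumS wgt_ccV; last by lia.
rewrite !ler_pdivrMr ?addr_gt0 ?invr_gt0 // mulrDr mulfV ?lt0r_neq0 //.
have -> : k.+1%:R - 2 = k%:R - 2 + 1 :> R by rewrite mulrS; ring.
by rewrite lerD2r.
Qed.

Section Profile.
Hypothesis cc_sorted : forall j, (1 <= j < p)%N -> cc d g j.+1 <= cc d g j.

Lemma cc_le i j : (1 <= i <= j)%N -> (j <= p)%N -> cc d g j <= cc d g i.
Proof.
move=> /andP[i_ge1 le_ij]; rewrite -(subnKC le_ij).
elim: (j - i)%N => [|n IHn] le_p; first by rewrite addn0.
by rewrite addnS; apply: le_trans (cc_sorted _ _) (IHn _); lia.
Qed.

Context {k : nat}.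
Hypothesis k_range : (3 <= k <= p)%N.
Hypothesis k_first : forall j, (3 <= j)%N -> (j < k)%N -> ~ (cc d g j.+1 < ratk d g j).
Hypothesis k_stop : (k < p)%N -> cc d g k.+1 < ratk d g k.

Lemma ratk_gt0 : 0 < ratk d g k.
Proof.
apply: divr_gt0; last by apply: Ssum_gt0; lia.
have : (3%:R : R) <= k%:R by rewrite ler_nat; lia.
lra.
Qed.

Lemma ratk_Ssum : ratk d g k * Ssum d g k = k%:R - 2.
Proof. by rewrite divfK // lt0r_neq0 // Ssum_gt0 //; lia. Qed.

Lemma ratk_le_cc : ratk d g k <= cc d g k.
Proof.
case: k k_range k_first => [//|k'] /andP[k'_ge2 k'_lt_p] first_k'.
rewrite ratkS_le_cc //; last lia.
have [k'_ge3 | k'_eq2] := leqP 3 k'.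
  by rewrite leNgt; apply/negP; apply: first_k'.
have -> : k' = 2%N by lia.
by rewrite /ratk subrr mul0r; apply/ltW/cc_gt0; lia.
Qed.

(* The beta of the header: on [1, p] it equals [min (ratk d g k) (cc d g j)]. *)
Definition profile j := if (j <= k)%N then ratk d g k else cc d g j.

Lemma profile_gt0 j : (1 <= j <= p)%N -> 0 < profile j.
Proof. by move=> hj; rewrite /profile; case: leqP => _; [exact: ratk_gt0 | exact: cc_gt0]. Qed.

Lemma profile_lt_ratk j : (k < j <= p)%N -> profile j < ratk d g k.
Proof.
move=> /andP[k_lt_j j_le_p]; rewrite /profile leqNgt k_lt_j /=.
by apply: le_lt_trans (k_stop _); [apply: cc_le | ]; lia.
Qed.

Lemma profile_le_ratk j : (j <= p)%N -> profile j <= ratk d g k.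
Proof.
move=> j_le_p; case: (leqP j k) => [j_le_k | k_lt_j]; first by rewrite /profile j_le_k.
by rewrite ltW // profile_lt_ratk // k_lt_j.
Qed.

Lemma wgt_ratk_le1 j : (1 <= j <= k)%N -> wgt j * ratk d g k <= 1.
Proof.
move=> hj; have hj' : (1 <= j <= p)%N by lia.
rewrite -(wgt_ccK hj') ler_pM2l ?wgt_gt0 //.
by apply: le_trans ratk_le_cc (cc_le _ _ _ _); lia.
Qed.

Lemma sum_split_profile (F : nat -> R) :
  \sum_(1 <= j < p.+1) F j = \sum_(1 <= j < k.+1) F j + \sum_(k.+1 <= j < p.+1) F j.
Proof. by rewrite -big_cat_nat //; lia. Qed.

Lemma sum_wgt_profile2 :
  \sum_(1 <= j < p.+1) wgt j * profile j ^+ 2 = Mk d g p k.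
Proof.
rewrite sum_split_profile; congr (_ + _).
  rewrite (eq_big_nat _ _ (F2 := fun j => wgt j * ratk d g k ^+ 2)); last first.
    by move=> j /andP[_]; rewrite ltnS /profile => ->.
  rewrite -mulr_suml -/(Ssum d g k) -ratk_Ssum /ratk; field.
  by rewrite lt0r_neq0 // Ssum_gt0 //; lia.
apply: eq_big_nat => j /andP[k_lt_j j_le_p].
by rewrite /profile leqNgt k_lt_j expr2 mulrA wgt_ccK ?mul1r //; lia.
Qed.

Lemma obj_le_profile b :
  obj d b p <= \sum_(1 <= j < p.+1) wgt j * profile j * (d j * b j).
Proof.
set m := maxdb d b p.
have db_le_m j : (1 <= j <= p)%N -> d j * b j <= m.
  move=> hj; apply: (le_bigmax_seq 0 j xpredT (fun i => d i * b i)) => //.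
  by rewrite mem_index_iota; lia.
suff : \sum_(1 <= j < p.+1) (d j * b j - wgt j * profile j * (d j * b j)) <= 2 * m.
  by rewrite /obj -/m sumrB; lra.
rewrite sum_split_profile [X in _ + X]big_nat_cond [X in _ + X]big1 ?addr0; last first.
  move=> j /andP[/andP[k_lt_j j_le_p] _].
  by rewrite /profile leqNgt k_lt_j wgt_ccK ?mul1r ?subrr //; lia.
apply: le_trans (ler_sum_nat (G := fun j => (1 - wgt j * ratk d g k) * m) _) _.
  move=> j /andP[j_ge1]; rewrite ltnS => j_le_k.
  rewrite /profile j_le_k -{1}[d j * b j]mul1r -mulrBl ler_wpM2l ?db_le_m //; last lia.
  by rewrite subr_ge0 wgt_ratk_le1 // j_ge1.
rewrite -mulr_suml sumrB sumr_const_nat -mulr_suml -/(Ssum d g k).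
by rewrite [Ssum _ _ _ * _]mulrC ratk_Ssum subSS subn0 opprB addrC subrK.
Qed.

Lemma maxdb_profile b lam : 0 < lam ->
  (forall j, (1 <= j <= p)%N -> d j * b j = lam * profile j) ->
  maxdb d b p = lam * ratk d g k.
Proof.
move=> lam_gt0 db_eq; apply/le_anti/andP; split.
  rewrite /maxdb big_nat_cond; apply: bigmax_le => [|j /andP[hj _]].
    by rewrite ltW // mulr_gt0 // ratk_gt0.
  by rewrite db_eq // ler_pM2l // profile_le_ratk //; lia.
have -> : lam * ratk d g k = d k * b k by rewrite db_eq /profile ?leqnn //; lia.
apply: (le_bigmax_seq 0 k xpredT (fun i => d i * b i)) => //.
by rewrite mem_index_iota; lia.
Qed.

Lemma obj_profile b lam : 0 < lam ->
  (forall j, (1 <= j <= p)%N -> d j * b j = lam * profile j) ->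
  obj d b p = lam * Mk d g p k.
Proof.
move=> lam_gt0 db_eq; rewrite /obj (maxdb_profile _ _ lam_gt0 db_eq).
rewrite (eq_big_nat _ _ (F2 := fun j => lam * profile j)); last first.
  by move=> j hj; apply: db_eq; lia.
rewrite -mulr_sumr sum_split_profile.
rewrite (eq_big_nat _ _ (F2 := fun=> ratk d g k)); last first.
  by move=> j /andP[_]; rewrite ltnS /profile => ->.
rewrite [X in _ * (_ + X)](eq_big_nat _ _ (F2 := cc d g)); last first.
  by move=> j /andP[k_lt_j _]; rewrite /profile leqNgt k_lt_j.
rewrite sumr_const_nat subSS subn0 /Mk /ratk; ring.
Qed.

Lemma Mk_gt0 : 0 < Mk d g p k.
Proof.
rewrite -sum_wgt_profile2; apply: sumr_nat_gt0 => [|j hj]; first lia.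
by apply: mulr_gt0; [apply: wgt_gt0 | apply/exprn_gt0/profile_gt0]; lia.
Qed.

Lemma feasible_scaled_profile lam : 0 <= lam ->
  lam ^+ 2 * Mk d g p k = \sum_(1 <= j < p.+1) cc d g j ->
  feasible d g (fun j => lam * profile j / d j) p.
Proof.
move=> lam_ge0 lam2M; split=> [j hj|].
  by rewrite divr_ge0 ?mulr_ge0 // ltW // ?profile_gt0 ?d_gt0.
rewrite -lam2M -sum_wgt_profile2 mulr_sumr; apply: eq_big_nat => j hj.
have hj' : (1 <= j <= p)%N by lia.
rewrite dg_sqr_wgt // [d j * _]mulrC divfK ?lt0r_neq0 ?d_gt0 //; ring.
Qed.

Lemma maximizer_profile a : feasible d g a p ->
  (forall b, feasible d g b p -> obj d b p <= obj d a p) ->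
  exists2 lam, 0 < lam & forall j, (1 <= j <= p)%N -> d j * a j = lam * profile j.
Proof.
move=> a_feas a_opt; set C := \sum_(1 <= j < p.+1) cc d g j; set M := Mk d g p k.
have C_gt0 : 0 < C by apply: sumr_nat_gt0 => [|j hj]; [lia | apply: cc_gt0; lia].
have M_gt0 : 0 < M := Mk_gt0.
pose lam := Num.sqrt (C / M).
have lam_gt0 : 0 < lam by rewrite sqrtr_gt0 divr_gt0.
have lam2M : lam ^+ 2 * M = C by rewrite sqr_sqrtr ?divfK ?lt0r_neq0 // ltW // divr_gt0.
have db_eq j : (1 <= j <= p)%N -> d j * (lam * profile j / d j) = lam * profile j.
  by move=> hj; rewrite mulrC divfK // lt0r_neq0 // d_gt0.
have := a_opt _ (feasible_scaled_profile _ (ltW lam_gt0) lam2M).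
rewrite (obj_profile _ _ lam_gt0 db_eq) => lamM_le_obj.
set X := \sum_(1 <= j < p.+1) wgt j * profile j * (d j * a j).
have lamM_le_X : lam ^+ 2 * M <= lam * X.
  by rewrite expr2 -mulrA ler_pM2l // (le_trans lamM_le_obj) // obj_le_profile.
(* Equality case of Cauchy-Schwarz for the [wgt]-weighted inner product. *)
pose dev j := wgt j * (lam * profile j - d j * a j) ^+ 2.
have dev_ge0 j : (1 <= j < p.+1)%N -> 0 <= dev j.
  by move=> hj; rewrite mulr_ge0 ?sqr_ge0 // ltW // wgt_gt0.
have sum_dev : \sum_(1 <= j < p.+1) dev j = lam ^+ 2 * M - 2 * lam * X + C.
  have [_ a_sphere] := a_feas; rewrite /C -a_sphere.
  rewrite [X in _ = _ + X](eq_big_nat _ _ (F2 := fun j => wgt j * (d j * a j) ^+ 2)); last first.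
    by move=> j hj; apply: dg_sqr_wgt; lia.
  rewrite /M -sum_wgt_profile2 /X.
  rewrite !mulr_sumr -sumrB -big_split /=.
  by apply: eq_big_nat => j _; rewrite /dev; ring.
have dev_le0 : \sum_(1 <= j < p.+1) dev j <= 0 by rewrite sum_dev; lra.
exists lam => // j hj.
have /eqP : dev j = 0 by apply: (sumr_nat_le0_eq0 dev_ge0 dev_le0); lia.
by rewrite mulf_eq0 (gt_eqF (wgt_gt0 hj)) sqrf_eq0 subr_eq0 => /eqP <-.
Qed.

Lemma maximizer_argmax {a nu} : feasible d g a p ->
  (forall b, feasible d g b p -> obj d b p <= obj d a p) ->
  (1 <= nu <= p)%N -> d nu * a nu = maxdb d a p ->
  (forall j, (nu < j <= p)%N -> d j * a j <> maxdb d a p) ->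
  nu = k /\ ((k < p)%N -> d k.+1 * a k.+1 < d k * a k).
Proof.
move=> a_feas a_opt nu_range nu_max nu_last.
have [lam lam_gt0 da_eq] := maximizer_profile _ a_feas a_opt.
have max_eq := maxdb_profile _ _ lam_gt0 da_eq.
have da_k : d k * a k = lam * ratk d g k by rewrite da_eq /profile ?leqnn //; lia.
have da_lt j : (k < j <= p)%N -> d j * a j < d k * a k.
  by move=> hj; rewrite da_k da_eq ?ltr_pM2l ?profile_lt_ratk //; lia.
split=> [|k_lt_p]; last by apply: da_lt; lia.
apply/eqP; rewrite eqn_leq; apply/andP; split; rewrite leqNgt; apply/negP => lt.
- by have := da_lt nu ltac:(lia); rewrite nu_max max_eq -da_k ltxx.
- by apply: (nu_last k); [lia | rewrite max_eq -da_k].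
Qed.

End Profile.

End Weights.

Theorem corollary2 (R : realType) (p : nat) (d g a : nat -> R) (nu : nat) :
  (3 <= p)%N ->
  (forall j, (1 <= j <= p)%N -> 0 < d j) ->
  (forall j, (1 <= j <= p)%N -> 0 <= g j) ->
  (forall j, (1 <= j < p)%N -> cc d g j.+1 <= cc d g j) ->
  (* a is the (unique) maximizer A^dagger *)
  feasible d g a p ->
  (forall b, feasible d g b p -> obj d b p <= obj d a p) ->
  (forall b, feasible d g b p -> obj d b p = obj d a p ->
     forall j, (1 <= j <= p)%N -> b j = a j) ->
  (* nu is the largest index attaining max_j d_j a_j *)
  (1 <= nu <= p)%N ->
  d nu * a nu = maxdb d a p ->
  (forall j, (nu < j <= p)%N -> d j * a j <> maxdb d a p) ->
  (3 <= nu)%N ->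
  (forall k, (3 <= k <= p.-1)%N ->
     Mk d g p k.+1 <= Mk d g p k /\
     (Mk d g p k = Mk d g p k.+1 <-> ratk d g k = cc d g k.+1)) /\
  ((nu <= p.-1)%N ->
     (d nu.+1 * a nu.+1 < d nu * a nu <-> cc d g nu.+1 < ratk d g nu) /\
     ((3 <= nu <= p.-1)%N /\ cc d g nu.+1 < ratk d g nu /\
      (forall k, (3 <= k)%N -> (k < nu)%N -> ~ (cc d g k.+1 < ratk d g k))) /\
     Mk d g p nu.+1 < Mk d g p nu).
Proof.
move=> p_ge3 d_gt0 g_ge0 cc_sorted a_feas a_opt _ nu_range nu_max nu_last _.
split=> [k hk | nu_lt_p].
  have hk' : (1 <= k < p)%N by lia.
  by split; [exact: Mk_leS | exact: Mk_eqS].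
pose stops k := (3 <= k)%N && ((k == p) || (cc d g k.+1 < ratk d g k)).
have stops_p : stops p by rewrite /stops p_ge3 eqxx.
have [K /andP[K_ge3 K_stops] K_min] := ex_minnP (ex_intro stops p stops_p).
have K_le_p : (K <= p)%N := K_min p stops_p.
have K_first j : (3 <= j)%N -> (j < K)%N -> ~ (cc d g j.+1 < ratk d g j).
  by move=> j_ge3 j_lt_K j_stops; have := K_min j; rewrite /stops j_ge3 j_stops orbT; lia.
have K_stop : (K < p)%N -> cc d g K.+1 < ratk d g K.
  by move=> K_lt_p; move: K_stops; rewrite ltn_eqF.
have K_range : (3 <= K <= p)%N by rewrite K_ge3.
have [nu_K drop] := maximizer_argmax d_gt0 g_ge0 cc_sorted K_range K_first K_stop
  a_feas a_opt nu_range nu_max nu_last.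
subst nu; have K_lt_p : (K < p)%N by lia.
have gap := K_stop K_lt_p.
have K_range' : (3 <= K <= p.-1)%N by lia.
split; first by split=> _; [exact: gap | exact: drop].
split; first by split; last split.
have hK : (1 <= K < p)%N by lia.
rewrite lt_def Mk_leS // andbT; apply/eqP => /(Mk_eqS d_gt0 g_ge0 _ hK) eq_gap.
by move: gap; rewrite eq_gap ltxx.
Qed.
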